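(* Let $J\in\mathbb N$ be fixed, and for $j=1,\dots,J$ let $U_j,\hat U_j$ be orthogonal projection matrices of the same rank $K_j$ (of a common dimension). For $0\le\alpha_N<1/(4\sqrt2+2)$ define maps on chains $V=(V_1,\dots,V_J)$ of projectors by $$[\hat{\mathcal G}_{\alpha_N}(V)]_1=\Pi_{K_1}(\hat U_1+\alpha_NV_2),\quad [\hat{\mathcal G}_{\alpha_N}(V)]_j=\Pi_{K_j}(\alpha_NV_{j-1}+\hat U_j+\alpha_NV_{j+1})\ (2\le j\le J-1),\quad [\hat{\mathcal G}_{\alpha_N}(V)]_J=\Pi_{K_J}(\alpha_NV_{J-1}+\hat U_J),$$ and $\mathcal G_{\alpha_N}$ analogously with $\hat U_j$ replaced by $U_j$. Let $(\bar U_j)_j$ be the fixed point of $\hat{\mathcal G}_{\alpha_N}$ and $(U_j^{(\alpha_N)})_j$ the fixed point of $\mathcal G_{\alpha_N}$. Then there is a constant $C>0$, independent of $N$, such that $$\sum_{j=1}^J\|\bar U_j-U_j\|_F\le C\Bigl(\sum_{j=1}^J\|\hat U_j-U_j\|_F+\alpha_N\Bigr).$$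
   Context: $\Pi_K(M)=\sum_{k=1}^K\nu_k\nu_k'$ denotes the orthogonal projector onto the span of the top-$K$ eigenvectors $\nu_1,\dots,\nu_K$ of a symmetric matrix $M$. $\alpha_N$ is a smoothing parameter (possibly depending on a sample size $N$). *)

From HB Require Import structures.
From mathcomp Require Import all_boot all_order all_algebra.
From mathcomp Require Import reals.
Set Implicit Arguments. Unset Strict Implicit. Unset Printing Implicit Defensive.
Import Order.TTheory GRing.Theory Num.Theory.
Local Open Scope ring_scope.

Section Defs.
Variable R : realType.

Definition orth_proj (d : nat) (P : 'M[R]_d) : Prop :=
  P^T = P /\ P *m P = P.

Definition frob (m n : nat) (A : 'M[R]_(m, n)) : R :=
  Num.sqrt (\sum_(i < m) \sum_(j < n) A i j ^+ 2).

(* P is Pi_K(M) = sum_{k<=K} nu_k nu_k' for an orthonormal eigenbasis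
   nu_1..nu_d of M (columns of Q) ordered by nonincreasing eigenvalues. *)
Definition is_PiK (d K : nat) (M P : 'M[R]_d) : Prop :=
  exists (Q : 'M[R]_d) (lam : 'rV[R]_d),
    Q^T *m Q = 1%:M /\
    (forall i j : 'I_d, (i <= j)%N -> lam 0 j <= lam 0 i) /\
    M = Q *m diag_mx lam *m Q^T /\
    P = \sum_(k < d | (k < K)%N) col k Q *m (col k Q)^T.

Definition chain_at (d J : nat) (V : nat -> 'M[R]_d) (j : nat) : 'M[R]_d :=
  if (1 <= j <= J)%N then V j else 0.

(* V is a fixed point of the map G_alpha built from the chain W:
   V_j = Pi_{K_j}(alpha V_{j-1} + W_j + alpha V_{j+1}), with V_0 = V_{J+1} = 0 *)
Definition is_fixed_point (d J : nat) (K : nat -> nat) (alpha : R)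
    (W V : nat -> 'M[R]_d) : Prop :=
  forall j : nat, (1 <= j <= J)%N ->
    is_PiK (K j) (alpha *: chain_at J V j.-1 + W j + alpha *: chain_at J V j.+1)
      (V j).

End Defs.

(* By Ky Fan's maximum principle, Pi_K(M) maximises tr (P M) over orthogonal
   projectors P of rank K; comparing it with a rank-K projector U yields the
   Davis-Kahan type bound |Pi_K(M) - U|_F <= 2 |M - U|_F.  At the fixed point,
   Ub_j = Pi_{K_j}(alpha V_{j-1} + Uh_j + alpha V_{j+1}) where the V_{j+-1} are
   projectors (or 0), hence of Frobenius norm at most sqrt d, so
   |Ub_j - U_j|_F <= 4 |Uh_j - U_j|_F + 8 sqrt d alpha; summing over j gives
   C = 4 + 8 sqrt d J. *)

From HB Require Import structures.
From mathcomp Require Import all_boot all_order all_algebra.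
From mathcomp Require Import reals ring lra zify.
Import Order.TTheory GRing.Theory Num.Theory.
Local Open Scope ring_scope.
Set Implicit Arguments. Unset Strict Implicit. Unset Printing Implicit Defensive.

Section Trace.
Variable R : realType.

Lemma sum_indicator_lt n r : (r <= n)%N ->
  \sum_(i < n) ((i < r)%N%:R : R) = r%:R.
Proof.
move=> le_rn; rewrite (eq_bigr (fun i : 'I_n => if (i < r)%N then 1 else 0)).
  by rewrite -big_mkcond -(big_ord_widen n (fun _ => 1) le_rn) sumr_const card_ord.
by move=> i _; case: ifP.
Qed.

Lemma mxtrace_pid n r : (r <= n)%N -> \tr (pid_mx r : 'M[R]_n) = r%:R.
Proof.
move=> le_rn; rewrite /mxtrace -(sum_indicator_lt le_rn).
by apply: eq_bigr => i _; rewrite mxE eqxx.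
Qed.

(* Writing A = L D Rb with D = pid_mx (rank A) and L, Rb invertible, idempotence
   becomes D (Rb L) D = D, and tr A = tr (D (Rb L) D). *)
Lemma mxtrace_idem d (A : 'M[R]_d) : A *m A = A -> \tr A = (\rank A)%:R.
Proof.
move=> AA; set L := col_ebase A; set Rb := row_ebase A.
set D : 'M[R]_d := pid_mx (\rank A).
have eA : A = L *m D *m Rb by rewrite mulmx_ebase.
have uL : L \in unitmx by apply: col_ebase_unit.
have uRb : Rb \in unitmx by apply: row_ebase_unit.
have DD : D *m D = D by rewrite pid_mx_id // rank_leq_row.
have DRbLD : D *m (Rb *m L) *m D = D.
  move: (congr1 (fun X => invmx L *m X *m invmx Rb) AA).
  by rewrite /= {1 2 3}eA !mulmxA !mulVmx // !mul1mx !mulmxK.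
rewrite {1}eA -mulmxA mxtrace_mulC -mulmxA -{1}DD -mulmxA mxtrace_mulC.
by rewrite DRbLD mxtrace_pid ?rank_leq_row.
Qed.

End Trace.

Section Frobenius.
Variable R : realType.

Definition frob_dot m n (A B : 'M[R]_(m, n)) : R :=
  \sum_(i < m) \sum_(j < n) A i j * B i j.

Lemma frob_dotE m n (A B : 'M[R]_(m, n)) : frob_dot A B = \tr (A^T *m B).
Proof.
rewrite /frob_dot /mxtrace exchange_big; apply: eq_bigr => j _.
by rewrite mxE; apply: eq_bigr => i _; rewrite mxE.
Qed.

Lemma frob_dot_ge0 m n (A : 'M[R]_(m, n)) : 0 <= frob_dot A A.
Proof. by do 2![apply: sumr_ge0 => ? _]; rewrite -expr2 sqr_ge0. Qed.

Lemma frobE m n (A : 'M[R]_(m, n)) : frob A = Num.sqrt (frob_dot A A).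
Proof.
by rewrite /frob /frob_dot; congr Num.sqrt; do 2![apply: eq_bigr => ? _]; rewrite expr2.
Qed.

Lemma frob_ge0 m n (A : 'M[R]_(m, n)) : 0 <= frob A.
Proof. by rewrite frobE sqrtr_ge0. Qed.

Lemma frob_le m n (A : 'M[R]_(m, n)) c :
  0 <= c -> frob_dot A A <= c ^+ 2 -> frob A <= c.
Proof.
move=> c0 hA; rewrite frobE; apply: le_trans (ler_wsqrtr hA) _.
by rewrite sqrtr_sqr ger0_norm.
Qed.

Lemma frobZ m n (a : R) (A : 'M[R]_(m, n)) : frob (a *: A) = `|a| * frob A.
Proof.
rewrite !frobE; have -> : frob_dot (a *: A) (a *: A) = a ^+ 2 * frob_dot A A.
  rewrite /frob_dot mulr_sumr; apply: eq_bigr => i _; rewrite mulr_sumr.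
  by apply: eq_bigr => j _; rewrite !mxE; ring.
by rewrite sqrtrM ?sqr_ge0 // sqrtr_sqr.
Qed.

Lemma frob_add3_le m n (A B C : 'M[R]_(m, n)) :
  frob (A + B + C) <= 2 * (frob A + frob B + frob C).
Proof.
rewrite (frobE A) (frobE B) (frobE C); apply: frob_le.
  by rewrite mulr_ge0 // !addr_ge0 // sqrtr_ge0.
have sum_sq : frob_dot (A + B + C) (A + B + C)
    <= 3 * (frob_dot A A + frob_dot B B + frob_dot C C).
  rewrite /frob_dot -!big_split /= mulr_sumr; apply: ler_sum => i _.
  rewrite -!big_split /= mulr_sumr; apply: ler_sum => j _; rewrite !mxE.
  have := sqr_ge0 (A i j - B i j); have := sqr_ge0 (A i j - C i j).
  have := sqr_ge0 (B i j - C i j); nra.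
move: sum_sq.
have := sqr_sqrtr (frob_dot_ge0 A); have := sqrtr_ge0 (frob_dot A A).
have := sqr_sqrtr (frob_dot_ge0 B); have := sqrtr_ge0 (frob_dot B B).
have := sqr_sqrtr (frob_dot_ge0 C); have := sqrtr_ge0 (frob_dot C C).
set a := Num.sqrt _; set b := Num.sqrt _; set c := Num.sqrt _; nra.
Qed.

Lemma frob_orth_proj d (P : 'M[R]_d) :
  orth_proj P -> frob P = Num.sqrt (\rank P)%:R.
Proof. by move=> [PT PP]; rewrite frobE frob_dotE PT PP mxtrace_idem. Qed.

Lemma frob_orth_proj_le d (P : 'M[R]_d) : orth_proj P -> frob P <= Num.sqrt d%:R.
Proof. by move/frob_orth_proj->; rewrite ler_wsqrtr // ler_nat rank_leq_row. Qed.

End Frobenius.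

Section TopEigenprojector.
Variable R : realType.

(* Each term of (1_{k<K} - w k) * (lam k - lam (K-1)) is nonnegative, and the
   weights 1_{k<K} - w k sum to zero. *)
Lemma weighted_sum_le_top_sum n K (w lam : 'I_n -> R) : (K <= n)%N ->
  (forall k, 0 <= w k <= 1) -> \sum_k w k = K%:R ->
  (forall i j : 'I_n, (i <= j)%N -> lam j <= lam i) ->
  \sum_k w k * lam k <= \sum_(k < n) (k < K)%N%:R * lam k.
Proof.
case: n w lam => [|n] w lam le_Kn w01 sum_w lam_nonincr; first by rewrite !big_ord0.
set m := lam (inord K.-1).
have termwise (k : 'I_n.+1) :
    ((k < K)%N%:R - w k) * m <= ((k < K)%N%:R - w k) * lam k.
  have /andP [w0 w1] := w01 k.
  have val_m : (inord K.-1 : 'I_n.+1) = K.-1 :> nat by rewrite inordK //; lia.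
  case: ltnP => [lt_kK | le_Kk].
    by rewrite ler_wpM2l ?subr_ge0 // lam_nonincr // val_m; lia.
  by rewrite sub0r !mulNr lerN2 ler_wpM2l // lam_nonincr // val_m; lia.
have : \sum_(k < n.+1) ((k < K)%N%:R - w k) * m
       <= \sum_(k < n.+1) ((k < K)%N%:R - w k) * lam k.
  by apply: ler_sum => k _; apply: termwise.
rewrite -mulr_suml sumrB sum_w sum_indicator_lt // subrr mul0r.
under eq_bigr do rewrite mulrBl.
by rewrite sumrB subr_ge0.
Qed.

Lemma orth_proj_diag_bound d (P : 'M[R]_d) k : orth_proj P -> 0 <= P k k <= 1.
Proof.
move=> [PT PP].
have Pkk : P k k = \sum_i P i k ^+ 2.
  by rewrite -{1}PP mxE; apply: eq_bigr => i _; rewrite -{1}PT mxE expr2.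
have Pkk_ge0 : 0 <= P k k by rewrite Pkk sumr_ge0 // => i _; apply: sqr_ge0.
have : P k k ^+ 2 <= P k k.
  by rewrite {2}Pkk (bigD1 k) //= lerDl sumr_ge0 // => i _; apply: sqr_ge0.
by rewrite Pkk_ge0 /=; nra.
Qed.

Lemma orth_proj_conj d (Q U : 'M[R]_d) :
  Q^T *m Q = 1%:M -> orth_proj U -> orth_proj (Q *m U *m Q^T).
Proof.
move=> QTQ [UT UU]; split; first by rewrite !trmx_mul trmxK UT mulmxA.
by rewrite !mulmxA -(mulmxA _ Q^T) QTQ mulmx1 -(mulmxA Q U) UU.
Qed.

Lemma orth_proj_pid d K : orth_proj (pid_mx K : 'M[R]_d).
Proof. by split; rewrite ?tr_pid_mx // mul_pid_mx minnn pid_mx_minv. Qed.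

Lemma is_PiK_eigen d K (M P : 'M[R]_d) : is_PiK K M P ->
  exists (Q : 'M[R]_d) (lam : 'rV[R]_d),
    [/\ Q^T *m Q = 1%:M, Q *m Q^T = 1%:M,
        forall i j : 'I_d, (i <= j)%N -> lam 0 j <= lam 0 i,
        M = Q *m diag_mx lam *m Q^T & P = Q *m pid_mx K *m Q^T].
Proof.
move=> [Q [lam [QTQ [lam_nonincr [-> ->]]]]]; exists Q, lam.
split=> //; first exact: mulmx1C.
have -> : pid_mx K = diag_mx (\row_(k < d) ((k < K)%N%:R : R)).
  by apply/matrixP => a b; rewrite !mxE -val_eqE; case: eqVneq => //= ->.
apply/matrixP => i j; rewrite summxE mul_mx_diag !mxE big_mkcond /=.
apply: eq_bigr => k _; rewrite !mxE big_ord1 !mxE.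
by case: ifP => _; rewrite ?mulr1 ?mulr0 ?mul0r.
Qed.

Lemma is_PiK_orth_proj d K (M P : 'M[R]_d) : is_PiK K M P -> orth_proj P.
Proof.
by case/is_PiK_eigen => Q [lam [QTQ _ _ _ ->]]; apply/orth_proj_conj/orth_proj_pid.
Qed.

Lemma is_PiK_mxtrace d K (M P : 'M[R]_d) :
  (K <= d)%N -> is_PiK K M P -> \tr P = K%:R.
Proof.
move=> le_Kd /is_PiK_eigen [Q [lam [QTQ _ _ _ ->]]].
by rewrite mxtrace_mulC mulmxA QTQ mul1mx mxtrace_pid.
Qed.

End TopEigenprojector.

Section DavisKahan.
Variable R : realType.
Variables (d K : nat) (M P U : 'M[R]_d).
Hypotheses (PiK_MP : is_PiK K M P) (projU : orth_proj U) (rankU : \rank U = K).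

(* Ky Fan: in the eigenbasis of M, tr (U M) is a [0,1]-weighted sum of the
   eigenvalues with total weight K, while tr (P M) is the sum of the top K. *)
Lemma mxtrace_mul_le_PiK : \tr (U *m M) <= \tr (P *m M).
Proof.
have [Q [lam [QTQ QQT lam_nonincr eM eP]]] := is_PiK_eigen PiK_MP.
set W := Q^T *m U *m Q.
have projW : orth_proj W by have := @orth_proj_conj _ _ Q^T U; rewrite trmxK; apply.
have sum_diagW : \sum_k W k k = K%:R.
  rewrite -rankU -mxtrace_idem; last by case: projU.
  by rewrite -[LHS]/(\tr W) mxtrace_mulC mulmxA QQT mul1mx.
have -> : \tr (U *m M) = \sum_k W k k * lam 0 k.
  rewrite eM mulmxA mxtrace_mulC !mulmxA -/W mul_mx_diag.
  by apply: eq_bigr => k _; rewrite mxE.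
have -> : \tr (P *m M) = \sum_(k < d) (k < K)%N%:R * lam 0 k.
  rewrite eP eM !mulmxA -(mulmxA (Q *m _) Q^T) QTQ mulmx1 mxtrace_mulC !mulmxA.
  rewrite QTQ mul1mx mul_mx_diag.
  by apply: eq_bigr => k _; rewrite !mxE eqxx.
apply: weighted_sum_le_top_sum => // [|k]; last exact: orth_proj_diag_bound.
by rewrite -rankU rank_leq_row.
Qed.

(* With S = P - U and E = M - U, Ky Fan gives |S|^2 <= 2 <S, E>, and
   2 <S, E> <= |S|^2 / 2 + 2 |E|^2. *)
Lemma frob_PiK_sub_le : frob (P - U) <= 2 * frob (M - U).
Proof.
have [UT UU] := projU; have [PT PP] := is_PiK_orth_proj PiK_MP.
have le_Kd : (K <= d)%N by rewrite -rankU rank_leq_row.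
have trU : \tr U = K%:R by rewrite mxtrace_idem // rankU.
have trP : \tr P = K%:R := is_PiK_mxtrace le_Kd PiK_MP.
set S := P - U; set E := M - U.
have ST : S^T = S by rewrite /S linearB /= PT UT.
have normS : frob_dot S S = \tr P - 2 * \tr (P *m U) + \tr U.
  rewrite frob_dotE ST /S mulmxBl !mulmxBr !raddfB /= PP UU (mxtrace_mulC U P); lra.
have dotSE : frob_dot S E = \tr (P *m M) - \tr (P *m U) - \tr (U *m M) + \tr U.
  rewrite frob_dotE ST /S /E mulmxBl !mulmxBr !raddfB /= UU; lra.
have kyfan := mxtrace_mul_le_PiK.
have young : 2 * frob_dot S E <= frob_dot S S / 2 + 2 * frob_dot E E.
  rewrite /frob_dot !mulr_sumr mulr_suml -big_split /=; apply: ler_sum => i _.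
  rewrite !mulr_sumr mulr_suml -big_split /=; apply: ler_sum => j _.
  have := sqr_ge0 (S i j - 2 * E i j); nra.
rewrite (frobE (M - U)); apply: frob_le; first by rewrite mulr_ge0 ?sqrtr_ge0.
rewrite exprMn sqr_sqrtr ?frob_dot_ge0 //; lra.
Qed.

End DavisKahan.

Section FixedPoint.
Variable R : realType.
Variables (d J : nat) (K : nat -> nat) (alpha : R) (U Uh Ub : nat -> 'M[R]_d).
Hypotheses (alpha_ge0 : 0 <= alpha) (fixUb : is_fixed_point J K alpha Uh Ub).

Lemma frob_chain_at_le j : frob (chain_at J Ub j) <= Num.sqrt d%:R.
Proof.
rewrite /chain_at; case: ifP => [/fixUb/is_PiK_orth_proj|_].
  exact: frob_orth_proj_le.
rewrite frobE /frob_dot big1 ?sqrtr0 ?sqrtr_ge0 // => i _.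
by rewrite big1 // => k _; rewrite mxE mul0r.
Qed.

Lemma frob_fixed_point_sub_le j : (1 <= j <= J)%N ->
  orth_proj (U j) -> \rank (U j) = K j ->
  frob (Ub j - U j) <= 4 * frob (Uh j - U j) + 8 * Num.sqrt d%:R * alpha.
Proof.
move=> jJ projU rankU; apply: le_trans (frob_PiK_sub_le (fixUb jJ) projU rankU) _.
set Vl := chain_at J Ub j.-1; set Vr := chain_at J Ub j.+1.
have -> : alpha *: Vl + Uh j + alpha *: Vr - U j = Uh j - U j + alpha *: Vl + alpha *: Vr.
  by apply/matrixP => a b; rewrite !mxE; lra.
have := frob_add3_le (Uh j - U j) (alpha *: Vl) (alpha *: Vr).
rewrite !frobZ ger0_norm //.
have := ler_wpM2l alpha_ge0 (frob_chain_at_le j.-1).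
have := ler_wpM2l alpha_ge0 (frob_chain_at_le j.+1).
rewrite -/Vl -/Vr; lra.
Qed.

End FixedPoint.

Theorem lemmaA1 (R : realType) (J d : nat) (K : nat -> nat)
    (U : nat -> 'M[R]_d) :
  (forall j : nat, (1 <= j <= J)%N -> orth_proj (U j) /\ \rank (U j) = K j) ->
  exists C : R, 0 < C /\
    forall (alpha : R) (Uh Ub : nat -> 'M[R]_d),
      0 <= alpha -> alpha < 1 / (4 * Num.sqrt 2 + 2) ->
      (forall j : nat, (1 <= j <= J)%N ->
         orth_proj (Uh j) /\ \rank (Uh j) = K j) ->
      is_fixed_point J K alpha Uh Ub ->
      \sum_(1 <= j < J.+1) frob (Ub j - U j)
        <= C * (\sum_(1 <= j < J.+1) frob (Uh j - U j) + alpha).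
Proof.
move=> projU; set c := Num.sqrt (d%:R : R).
have cJ_ge0 : 0 <= 8 * c * J%:R by rewrite !mulr_ge0 ?sqrtr_ge0.
exists (4 + 8 * c * J%:R); split=> [|alpha Uh Ub alpha_ge0 _ _ fixUb]; first lra.
have step j : (1 <= j < J.+1)%N ->
    frob (Ub j - U j) <= 4 * frob (Uh j - U j) + 8 * c * alpha.
  move=> jJ; have [projUj rankUj] := projU j jJ.
  exact: (frob_fixed_point_sub_le alpha_ge0 fixUb jJ projUj rankUj).
apply: le_trans (ler_sum_nat step) _.
rewrite big_split /= -mulr_sumr sumr_const_nat subn1 /= -mulr_natr.
have : 0 <= \sum_(1 <= j < J.+1) frob (Uh j - U j).
  by apply: sumr_ge0 => j _; apply: frob_ge0.
set e := \sum_(1 <= j < J.+1) _; nra.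
Qed.
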